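(* Let $k\ge 3$ be an integer such that every set of $k-1$ distinct positive integers has the LR property, and let $p$ be a positive integer. Let $N=\lfloor (k+1)p/2\rfloor$. Suppose there is no $k$-tuple $v_1,\ldots,v_k\in\{1,\ldots,N\}\setminus p\mathbb{N}$ such that (i) for every subset $S\subseteq\{v_1,\ldots,v_k\}$ of size $k-1$ we have $\gcd(S\cup\{(k+1)p\})=1$, and (ii) $\{v_1,\ldots,v_k\}$ covers $\{1,\ldots,N\}$. Then for every set $\{v_1,\ldots,v_k\}$ of $k$ distinct integers that does not have the LR property, $p$ divides $\prod_{i=1}^k v_i$.
   Context: For a real number $x$, $\|x\|$ denotes the distance from $x$ to the nearest integer. A finite set $S$ of $m$ integers has the LR (lonely runner) property if there exists a real $t$ such that $\|tv\|\ge \frac{1}{m+1}$ for all $v\in S$. Given $k$ and $p$, an integer $v$ covers an integer $j$ if $\left\|\frac{jv}{(k+1)p}\right\|<\frac{1}{k+1}$; a set $\{v_1,\ldots,v_i\}$ covers a set $T$ of integers if every element of $T$ is covered by at least one $v_l$. $p\mathbb{N}$ denotes the set of multiples of $p$. The hypothesis ''every set of $k-1$ distinct positive integers has the LR property'' is what the paper calls ''the lonely runner conjecture holds for $k-1$''. *)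

From Stdlib Require Import Reals ZArith List Lia Lra.
Open Scope R_scope.

Definition dist_int (x : R) : R :=
  Rmin (x - IZR (Int_part x)) (IZR (Int_part x) + 1 - x).

(* A finite set S of integers (a duplicate-free list, so m = length S)
   has the LR property if some real t has ||t v|| >= 1/(m+1) for all v in S. *)
Definition LR (S : list Z) : Prop :=
  exists t : R, forall v : Z, In v S ->
    dist_int (t * IZR v) >= 1 / INR (length S + 1).

Definition LRC_holds (m : nat) : Prop :=
  forall S : list Z, NoDup S -> length S = m ->
    (forall v, In v S -> (0 < v)%Z) -> LR S.

Definition covers (k p : nat) (v j : Z) : Prop :=
  dist_int (IZR (j * v) / IZR (Z.of_nat ((k + 1) * p))) < 1 / INR (k + 1).

Definition covers_interval (k p : nat) (vs : list Z) (N : Z) : Prop :=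
  forall j : Z, (1 <= j <= N)%Z -> exists v, In v vs /\ covers k p v j.

Definition remove_nth {A : Type} (i : nat) (l : list A) : list A :=
  firstn i l ++ skipn (S i) l.

Definition gcd_with (g0 : Z) (l : list Z) : Z := fold_right Z.gcd g0 l.

Definition prodZ (l : list Z) : Z := fold_right Z.mul 1%Z l.

From Stdlib Require Import Reals ZArith Znumtheory List Lia Lra Classical.
Open Scope R_scope.

(** Suppose [S] is not LR and [p] divides no element of [S]; dividing by the
    gcd, [S] may be taken primitive.  Replacing each [v] by the representative
    of [±v mod (k+1)p] in [[1, N]] keeps it off [pN] and does not change which
    [j] it covers, so, [S] failing LR at every [t = j/((k+1)p)], the folded set
    covers [[1, N]].  It also satisfies the gcd condition: a [d > 1] dividing
    [(k+1)p] and all folded elements but one divides all elements of [S] but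
    one, say [w], and not [w] by primitivity.  The conjecture for [k-1] then
    gives [t0] keeping the others at distance [1/k] from the integers, and
    shifting [t0] by a suitable multiple of [1/d] pushes [t w] to distance
    [1/4 >= 1/(k+1)] without moving the others: [S] would be LR. *)

Lemma dist_int_le_Rabs (x : R) (n : Z) : dist_int x <= Rabs (x - IZR n).
Proof.
  unfold dist_int. destruct (base_Int_part x) as [H1 H2].
  set (f := Int_part x) in *.
  destruct (Z_le_gt_dec n f) as [Hn | Hn].
  - apply IZR_le in Hn. eapply Rle_trans; [apply Rmin_l |].
    eapply Rle_trans; [| apply Rle_abs]. lra.
  - assert (Hn' : (f + 1 <= n)%Z) by lia.
    apply IZR_le in Hn'. rewrite plus_IZR in Hn'.
    eapply Rle_trans; [apply Rmin_r |].
    rewrite <- Rabs_Ropp. eapply Rle_trans; [| apply Rle_abs]. lra.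
Qed.

Lemma dist_int_eq_Rabs (x : R) : exists n : Z, dist_int x = Rabs (x - IZR n).
Proof.
  unfold dist_int. destruct (base_Int_part x) as [H1 H2].
  set (f := Int_part x) in *.
  unfold Rmin; destruct (Rle_dec _ _).
  - exists f. rewrite Rabs_pos_eq; lra.
  - exists (f + 1)%Z. rewrite plus_IZR, Rabs_left1; lra.
Qed.

Lemma dist_int_add_IZR (x : R) (n : Z) : dist_int (x + IZR n) = dist_int x.
Proof.
  apply Rle_antisym.
  - destruct (dist_int_eq_Rabs x) as [m ->].
    eapply Rle_trans; [apply (dist_int_le_Rabs _ (m + n)) |].
    rewrite plus_IZR. right. f_equal. ring.
  - destruct (dist_int_eq_Rabs (x + IZR n)) as [m ->].
    eapply Rle_trans; [apply (dist_int_le_Rabs _ (m - n)) |].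
    rewrite minus_IZR. right. f_equal. ring.
Qed.

Lemma dist_int_opp (x : R) : dist_int (- x) = dist_int x.
Proof.
  apply Rle_antisym.
  - destruct (dist_int_eq_Rabs x) as [m ->].
    eapply Rle_trans; [apply (dist_int_le_Rabs _ (- m)) |].
    rewrite opp_IZR, <- Rabs_Ropp. right. f_equal. ring.
  - destruct (dist_int_eq_Rabs (- x)) as [m ->].
    eapply Rle_trans; [apply (dist_int_le_Rabs _ (- m)) |].
    rewrite opp_IZR, <- Rabs_Ropp. right. f_equal. ring.
Qed.

Lemma dist_int_ge_quarter (x : R) (n : Z) :
  1 / 4 <= x - IZR n <= 3 / 4 -> 1 / 4 <= dist_int x.
Proof.
  intros Hx. destruct (dist_int_eq_Rabs x) as [m ->].
  destruct (Z_le_gt_dec m n) as [Hmn | Hmn].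
  - apply IZR_le in Hmn. eapply Rle_trans; [| apply Rle_abs]. lra.
  - assert (Hmn' : (n + 1 <= m)%Z) by lia.
    apply IZR_le in Hmn'. rewrite plus_IZR in Hmn'.
    rewrite <- Rabs_Ropp. eapply Rle_trans; [| apply Rle_abs]. lra.
Qed.

Lemma exists_dist_int_ge_quarter (x h : R) :
  0 < h <= 1 / 2 -> exists c : Z, 1 / 4 <= dist_int (x + IZR c * h).
Proof.
  intros Hh. destruct (archimed x) as [Hx1 Hx2].
  set (y := x - IZR (up x) + 1).
  set (z := (1 / 4 - y) / h).
  destruct (archimed z) as [Hz1 Hz2].
  exists (up z).
  assert (Hzh : z * h = 1 / 4 - y) by (unfold z; field; lra).
  assert (Hlo : IZR (up z) * h > z * h) by (apply Rmult_gt_compat_r; lra).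
  assert (Hhi : IZR (up z) * h <= (z + 1) * h) by (apply Rmult_le_compat_r; lra).
  apply (dist_int_ge_quarter _ (up x - 1)). rewrite minus_IZR. unfold y in *. lra.
Qed.

(* With [u w = gcd(w,d) (mod d)] from Bezout, [a = c u] makes [a w / d] equal to
   [c / q] modulo [Z], where [q = d / gcd(w,d) >= 2] as [d] does not divide [w]. *)
Lemma exists_multiplier_dist_int_ge_quarter (x : R) (w d : Z) :
  (0 < d)%Z -> ~ (d | w)%Z ->
  exists a : Z, 1 / 4 <= dist_int (x + IZR a * IZR w / IZR d).
Proof.
  intros Hd Hdw.
  set (g := Z.gcd w d).
  destruct (Z.gcd_bezout w d g eq_refl) as [u [v Huv]].
  assert (Hg0 : (0 <= g)%Z) by apply Z.gcd_nonneg.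
  assert (Hgd : (g | d)%Z) by apply Z.gcd_divide_r.
  destruct Hgd as [q Hq].
  assert (Hg : (0 < g)%Z).
  { destruct (Z.eq_dec g 0) as [E | E]; [rewrite E, Z.mul_0_r in Hq |]; lia. }
  assert (Hq2 : (2 <= q)%Z).
  { assert (q <> 1%Z).
    { intros ->. apply Hdw. rewrite Hq, Z.mul_1_l. apply Z.gcd_divide_l. }
    nia. }
  assert (Hdr : IZR d <> 0) by (apply not_0_IZR; lia).
  assert (Hh : 0 < IZR g / IZR d <= 1 / 2).
  { rewrite Hq, mult_IZR.
    assert (IZR q >= 2) by (apply Rle_ge, IZR_le; lia).
    assert (0 < IZR g) by (apply IZR_lt; lia).
    replace (IZR g / (IZR q * IZR g)) with (/ IZR q) by (field; lra).
    split; [apply Rinv_0_lt_compat; lra |].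
    replace (1 / 2) with (/ 2) by field. apply Rinv_le_contravar; lra. }
  destruct (exists_dist_int_ge_quarter x _ Hh) as [c Hc].
  exists (c * u)%Z.
  replace (x + IZR (c * u) * IZR w / IZR d)
    with (x + IZR c * (IZR g / IZR d) + IZR (- (c * v))).
  - rewrite dist_int_add_IZR. exact Hc.
  - rewrite <- Huv, opp_IZR, !mult_IZR, plus_IZR, !mult_IZR. field. exact Hdr.
Qed.

Lemma in_remove_nth (i : nat) (l : list Z) (v : Z) : In v (remove_nth i l) -> In v l.
Proof.
  unfold remove_nth. rewrite in_app_iff.
  intros [H | H]; [rewrite <- (firstn_skipn i l) | rewrite <- (firstn_skipn (S i) l)];
    apply in_or_app; auto.
Qed.

Lemma in_nth_or_remove_nth (l : list Z) (i : nat) (v : Z) :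
  (i < length l)%nat -> In v l -> v = nth i l 0%Z \/ In v (remove_nth i l).
Proof.
  revert i. induction l as [| a l IH]; intros i Hi Hv; simpl in *; [lia |].
  unfold remove_nth in *. destruct i as [| i]; simpl.
  - destruct Hv; auto.
  - destruct Hv as [Hv | Hv]; auto.
    destruct (IH i ltac:(lia) Hv); auto.
Qed.

Lemma length_remove_nth (l : list Z) (i : nat) :
  (i < length l)%nat -> length (remove_nth i l) = (length l - 1)%nat.
Proof.
  intros Hi. unfold remove_nth.
  rewrite length_app, length_firstn, length_skipn. lia.
Qed.

Lemma remove_nth_map (f : Z -> Z) (i : nat) (l : list Z) :
  remove_nth i (map f l) = map f (remove_nth i l).
Proof. unfold remove_nth. rewrite firstn_map, skipn_map, map_app. reflexivity. Qed.

Lemma gcd_with_divide_elem (g0 : Z) (l : list Z) (v : Z) :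
  In v l -> (gcd_with g0 l | v)%Z.
Proof.
  induction l as [| a l IH]; simpl; [tauto |].
  intros [<- | Hv]; [apply Z.gcd_divide_l |].
  eapply Z.divide_trans; [apply Z.gcd_divide_r | auto].
Qed.

Lemma gcd_with_divide_init (g0 : Z) (l : list Z) : (gcd_with g0 l | g0)%Z.
Proof.
  induction l as [| a l IH]; simpl; [apply Z.divide_refl |].
  eapply Z.divide_trans; [apply Z.gcd_divide_r | exact IH].
Qed.

Lemma gcd_with_nonneg (g0 : Z) (l : list Z) : (0 <= g0)%Z -> (0 <= gcd_with g0 l)%Z.
Proof. destruct l; simpl; auto using Z.gcd_nonneg. Qed.

Lemma gcd_with_greatest (g0 : Z) (l : list Z) (c : Z) :
  (c | g0)%Z -> (forall v, In v l -> (c | v)%Z) -> (c | gcd_with g0 l)%Z.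
Proof.
  induction l as [| a l IH]; simpl; auto.
  intros Hc Hl. apply Z.gcd_greatest; auto.
Qed.

Lemma divide_prodZ (l : list Z) (v : Z) : In v l -> (v | prodZ l)%Z.
Proof.
  induction l as [| a l IH]; simpl; [tauto |].
  intros [<- | Hv]; [apply Z.divide_factor_l | apply Z.divide_mul_r; auto].
Qed.

Lemma LR_map_mul (g : Z) (T : list Z) : g <> 0%Z -> LR T -> LR (map (Z.mul g) T).
Proof.
  intros Hg [t Ht]. exists (t / IZR g). intros v Hv.
  apply in_map_iff in Hv. destruct Hv as [e [<- He]].
  rewrite length_map, mult_IZR.
  replace (t / IZR g * (IZR g * IZR e)) with (t * IZR e); [auto |].
  field. apply not_0_IZR, Hg.
Qed.

Lemma not_LR_exists_close (S : list Z) :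
  ~ LR S -> forall t : R,
  exists v, In v S /\ dist_int (t * IZR v) < 1 / INR (length S + 1).
Proof.
  intros HS t. apply NNPP. intros Hno. apply HS. exists t. intros v Hv.
  apply Rnot_lt_ge. intros Hlt. apply Hno. eauto.
Qed.

Lemma exists_pos_NoDup_abs_superset (m : nat) (L : list Z) :
  (length L <= m)%nat -> (forall v, In v L -> v <> 0%Z) ->
  exists T, NoDup T /\ length T = m /\ (forall v, In v T -> (0 < v)%Z) /\
            (forall v, In v L -> In (Z.abs v) T).
Proof.
  intros Hlen Hnz.
  set (A := nodup Z.eq_dec (map Z.abs L)).
  set (B0 := fold_right (fun v acc => Z.abs v + acc)%Z 0%Z L).
  set (B := map (fun j => B0 + Z.of_nat j)%Z (seq 1 (m - length A))).
  assert (HB0 : (0 <= B0)%Z /\ forall v, In v L -> (Z.abs v <= B0)%Z).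
  { unfold B0. clear. induction L as [| a L [IH1 IH2]]; simpl; split; try tauto; try lia.
    intros v [<- | Hv]; [lia | specialize (IH2 v Hv); lia]. }
  assert (HA : forall a, In a A <-> exists v, Z.abs v = a /\ In v L).
  { intros a. unfold A. rewrite nodup_In, in_map_iff. reflexivity. }
  assert (HB : forall b, In b B <-> exists j, (B0 + Z.of_nat j)%Z = b /\ In j (seq 1 (m - length A))).
  { intros b. unfold B. rewrite in_map_iff. reflexivity. }
  assert (HAlen : (length A <= length L)%nat).
  { rewrite <- (length_map Z.abs L). apply NoDup_incl_length; [apply NoDup_nodup |].
    intros a Ha. apply HA in Ha. apply in_map_iff. exact Ha. }
  exists (A ++ B). repeat split.
  - apply NoDup_app; [apply NoDup_nodup | |].
    + apply NoDup_map_NoDup_ForallPairs; [intros i j _ _ Hij; lia | apply seq_NoDup].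
    + intros a Ha Hb. apply HA in Ha. apply HB in Hb.
      destruct Ha as [v [<- Hv]], Hb as [j [Hj Hj']]. apply in_seq in Hj'.
      destruct HB0 as [_ HB0]. specialize (HB0 v Hv). lia.
  - rewrite length_app. unfold B. rewrite length_map, length_seq. lia.
  - intros v Hv. apply in_app_or in Hv. destruct Hv as [Hv | Hv].
    + apply HA in Hv. destruct Hv as [u [<- Hu]]. specialize (Hnz u Hu). lia.
    + apply HB in Hv. destruct Hv as [j [<- Hj]]. apply in_seq in Hj. lia.
  - intros v Hv. apply in_or_app. left. apply HA. eauto.
Qed.

Lemma LRC_holds_nonzero (m : nat) (L : list Z) :
  LRC_holds m -> (length L <= m)%nat -> (forall v, In v L -> v <> 0%Z) ->
  exists t, forall v, In v L -> 1 / INR (m + 1) <= dist_int (t * IZR v).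
Proof.
  intros HLRC Hlen Hnz.
  destruct (exists_pos_NoDup_abs_superset m L Hlen Hnz) as [T [HT [HTlen [HTpos HLT]]]].
  destruct (HLRC T HT HTlen HTpos) as [t Ht]. exists t. intros v Hv.
  specialize (Ht _ (HLT v Hv)). rewrite HTlen in Ht.
  destruct (Z.abs_spec v) as [[_ E] | [_ E]]; rewrite E in Ht.
  - lra.
  - rewrite opp_IZR, <- Ropp_mult_distr_r, dist_int_opp in Ht. lra.
Qed.

(* Shifting [t] by a multiple of [1/d] moves [t v] by an integer for [d | v]. *)
Lemma extend_by_nondivisor (T : list Z) (w d : Z) (t0 delta : R) :
  (0 < d)%Z -> (forall v, In v T -> (d | v)%Z) -> ~ (d | w)%Z ->
  (forall v, In v T -> delta <= dist_int (t0 * IZR v)) ->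
  exists t, 1 / 4 <= dist_int (t * IZR w) /\
            forall v, In v T -> delta <= dist_int (t * IZR v).
Proof.
  intros Hd HdT Hdw Ht0.
  assert (Hdr : IZR d <> 0) by (apply not_0_IZR; lia).
  destruct (exists_multiplier_dist_int_ge_quarter (t0 * IZR w) w d Hd Hdw) as [a Ha].
  exists (t0 + IZR a / IZR d). split.
  - replace ((t0 + IZR a / IZR d) * IZR w) with (t0 * IZR w + IZR a * IZR w / IZR d)
      by (field; exact Hdr).
    exact Ha.
  - intros v Hv. destruct (HdT v Hv) as [e ->].
    replace ((t0 + IZR a / IZR d) * IZR (e * d)) with (t0 * IZR (e * d) + IZR (a * e))
      by (rewrite !mult_IZR; field; exact Hdr).
    rewrite dist_int_add_IZR. auto.
Qed.

Lemma LR_of_nondivisor (k i : nat) (S : list Z) (d : Z) :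
  (3 <= k)%nat -> LRC_holds (k - 1) -> length S = k -> (i < k)%nat ->
  (forall v, In v S -> v <> 0%Z) -> (0 < d)%Z ->
  (forall v, In v (remove_nth i S) -> (d | v)%Z) -> ~ (d | nth i S 0)%Z ->
  LR S.
Proof.
  intros Hk HLRC Hlen Hi Hnz Hd HdT Hdw.
  destruct (LRC_holds_nonzero (k - 1) (remove_nth i S) HLRC) as [t0 Ht0].
  { rewrite length_remove_nth; lia. }
  { intros v Hv. exact (Hnz v (in_remove_nth _ _ _ Hv)). }
  destruct (extend_by_nondivisor _ _ _ _ _ Hd HdT Hdw Ht0) as [t [Htw HtT]].
  assert (Hk1 : 4 <= INR (k + 1)) by (replace 4 with (INR 4) by (simpl; lra); apply le_INR; lia).
  assert (Hkk : INR (k - 1 + 1) <= INR (k + 1)) by (apply le_INR; lia).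
  exists t. intros v Hv. rewrite Hlen. apply Rle_ge.
  destruct (in_nth_or_remove_nth S i v ltac:(lia) Hv) as [-> | Hr].
  - eapply Rle_trans; [| exact Htw].
    unfold Rdiv. rewrite !Rmult_1_l. apply Rinv_le_contravar; lra.
  - eapply Rle_trans; [| exact (HtT v Hr)].
    unfold Rdiv. rewrite !Rmult_1_l. apply Rinv_le_contravar; [| exact Hkk].
    apply lt_0_INR. lia.
Qed.

Definition primitive (S : list Z) : Prop :=
  forall c, (forall v, In v S -> (c | v)%Z) -> (c | 1)%Z.

Lemma exists_primitive_factor (S : list Z) :
  (exists v, In v S /\ v <> 0%Z) ->
  exists g T, g <> 0%Z /\ S = map (Z.mul g) T /\ primitive T.
Proof.
  intros [v0 [Hv0 Hv0nz]].
  set (g := gcd_with 0 S).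
  assert (Hg : (0 < g)%Z).
  { assert (Hg0 : (0 <= g)%Z) by (apply gcd_with_nonneg; lia).
    destruct (Z.eq_dec g 0) as [E | E]; [| lia].
    exfalso. apply Hv0nz, Z.divide_0_l. rewrite <- E. apply gcd_with_divide_elem, Hv0. }
  assert (HgS : forall v, In v S -> v = (g * (v / g))%Z).
  { intros v Hv. apply Zdivide_Zdiv_eq; [exact Hg | apply gcd_with_divide_elem, Hv]. }
  exists g, (map (fun v => v / g)%Z S). split; [lia | split].
  - rewrite map_map. rewrite <- (map_id S) at 1. apply map_ext_in. exact HgS.
  - intros c Hc.
    assert (Hcg : (c * g | g)%Z).
    { apply gcd_with_greatest; [apply Z.divide_0_r |].
      intros v Hv. rewrite (HgS v Hv), (Z.mul_comm c g).
      apply Z.mul_divide_mono_l, Hc, (in_map (fun v => v / g)%Z), Hv. }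
    rewrite <- (Z.mul_1_l g) in Hcg at 2.
    apply Z.mul_divide_cancel_r in Hcg; [exact Hcg | lia].
Qed.

Lemma common_divisor_of_others_eq_1 (k i : nat) (S : list Z) (d : Z) :
  (3 <= k)%nat -> LRC_holds (k - 1) -> length S = k -> (i < k)%nat ->
  (forall v, In v S -> v <> 0%Z) -> primitive S -> ~ LR S -> (0 < d)%Z ->
  (forall v, In v (remove_nth i S) -> (d | v)%Z) -> d = 1%Z.
Proof.
  intros Hk HLRC Hlen Hi Hnz Hprim HnLR Hd HdT.
  destruct (classic (d | nth i S 0)%Z) as [Hdw | Hdw].
  - assert (Hd1 : (d | 1)%Z).
    { apply Hprim. intros v Hv.
      destruct (in_nth_or_remove_nth S i v ltac:(lia) Hv) as [-> | Hr]; auto. }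
    apply Z.divide_pos_le in Hd1; lia.
  - exfalso. exact (HnLR (LR_of_nondivisor k i S d Hk HLRC Hlen Hi Hnz Hd HdT Hdw)).
Qed.

Definition fold_mod (M v : Z) : Z :=
  if (v mod M <=? M / 2)%Z then (v mod M)%Z else (M - v mod M)%Z.

Lemma fold_mod_divide (M v d : Z) :
  (0 < M)%Z -> (d | M)%Z -> (d | fold_mod M v)%Z -> (d | v)%Z.
Proof.
  intros HM HdM Hd. rewrite (Z.div_mod v M ltac:(lia)).
  apply Z.divide_add_r; [apply Z.divide_mul_l, HdM |].
  unfold fold_mod in Hd. destruct (v mod M <=? M / 2)%Z; [exact Hd |].
  replace (v mod M)%Z with (M - (M - v mod M))%Z by lia.
  apply Z.divide_sub_r; assumption.
Qed.

Lemma fold_mod_range (M v : Z) :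
  (0 < M)%Z -> ~ (M | v)%Z -> (1 <= fold_mod M v <= M / 2)%Z.
Proof.
  intros HM HMv. assert (Hb := Z.mod_pos_bound v M HM).
  assert (Hnz : (v mod M <> 0)%Z) by (intros E; apply HMv, Z.mod_divide; lia).
  assert (H2 := Z.div_mod M 2 ltac:(lia)). assert (H3 := Z.mod_pos_bound M 2 ltac:(lia)).
  unfold fold_mod. destruct (Z.leb_spec (v mod M) (M / 2)); lia.
Qed.

Lemma dist_int_fold_mod (M v j : Z) :
  (0 < M)%Z ->
  dist_int (IZR (j * fold_mod M v) / IZR M) = dist_int (IZR (j * v) / IZR M).
Proof.
  intros HM. assert (HMr : IZR M <> 0) by (apply not_0_IZR; lia).
  unfold fold_mod. rewrite (Z.mod_eq v M ltac:(lia)).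
  destruct (v - M * (v / M) <=? M / 2)%Z.
  - replace (IZR (j * (v - M * (v / M))) / IZR M)
      with (IZR (j * v) / IZR M + IZR (- (j * (v / M)))).
    + apply dist_int_add_IZR.
    + rewrite !mult_IZR, minus_IZR, opp_IZR, !mult_IZR. field. exact HMr.
  - replace (IZR (j * (M - (v - M * (v / M)))) / IZR M)
      with (- (IZR (j * v) / IZR M) + IZR (j + j * (v / M))).
    + rewrite dist_int_add_IZR. apply dist_int_opp.
    + rewrite !mult_IZR, !minus_IZR, plus_IZR, !mult_IZR. field. exact HMr.
Qed.

Lemma exists_folded_cover (k p : nat) (S : list Z) :
  (3 <= k)%nat -> LRC_holds (k - 1) -> (1 <= p)%nat ->
  length S = k -> primitive S -> ~ LR S ->
  (forall v, In v S -> ~ (Z.of_nat p | v)%Z) ->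
  let M := Z.of_nat ((k + 1) * p) in
  exists vs : list Z,
    length vs = k /\
    (forall v, In v vs -> (1 <= v <= M / 2)%Z /\ ~ (Z.of_nat p | v)%Z) /\
    (forall i : nat, (i < k)%nat -> gcd_with M (remove_nth i vs) = 1%Z) /\
    covers_interval k p vs (M / 2).
Proof.
  intros Hk HLRC Hp Hlen Hprim HnLR Hpv M.
  assert (HM : (0 < M)%Z) by (unfold M; lia).
  assert (HpM : (Z.of_nat p | M)%Z).
  { exists (Z.of_nat (k + 1)). unfold M. rewrite Nat2Z.inj_mul. ring. }
  assert (Hnz : forall v, In v S -> v <> 0%Z).
  { intros v Hv ->. apply (Hpv 0%Z Hv), Z.divide_0_r. }
  exists (map (fold_mod M) S). split; [| split; [| split]].
  - rewrite length_map. exact Hlen.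
  - intros v Hv. apply in_map_iff in Hv. destruct Hv as [u [<- Hu]]. split.
    + apply fold_mod_range; [exact HM |].
      intros HMu. apply (Hpv u Hu). eapply Z.divide_trans; eassumption.
    + intros Hpu. exact (Hpv u Hu (fold_mod_divide M u _ HM HpM Hpu)).
  - intros i Hi. rewrite remove_nth_map.
    set (d := gcd_with M (map (fold_mod M) (remove_nth i S))).
    assert (HdM : (d | M)%Z) by apply gcd_with_divide_init.
    assert (Hd : (0 < d)%Z).
    { assert (Hd0 : (0 <= d)%Z) by (apply gcd_with_nonneg; lia).
      destruct (Z.eq_dec d 0) as [E | E]; [| lia].
      rewrite E in HdM. apply Z.divide_0_l in HdM. lia. }
    apply (common_divisor_of_others_eq_1 k i S d); auto.
    intros v Hv. apply (fold_mod_divide M v d HM HdM).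
    apply gcd_with_divide_elem, in_map, Hv.
  - intros j Hj.
    destruct (not_LR_exists_close S HnLR (IZR j / IZR M)) as [v [Hv Hclose]].
    exists (fold_mod M v). split; [apply in_map, Hv |].
    unfold covers. fold M. rewrite dist_int_fold_mod by exact HM.
    rewrite Hlen in Hclose.
    replace (IZR (j * v) / IZR M) with (IZR j / IZR M * IZR v); [exact Hclose |].
    rewrite mult_IZR. field. apply not_0_IZR. lia.
Qed.

Theorem lemma6 (k p : nat) :
  (3 <= k)%nat ->
  LRC_holds (k - 1) ->
  (1 <= p)%nat ->
  let N := (Z.of_nat ((k + 1) * p) / 2)%Z in
  ~ (exists vs : list Z,
        length vs = k /\
        (forall v, In v vs -> (1 <= v <= N)%Z /\ ~ (Z.of_nat p | v)%Z) /\
        (forall i : nat, (i < k)%nat ->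
           gcd_with (Z.of_nat ((k + 1) * p)) (remove_nth i vs) = 1%Z) /\
        covers_interval k p vs N) ->
  forall S : list Z, NoDup S -> length S = k -> ~ LR S ->
    (Z.of_nat p | prodZ S)%Z.
Proof.
  intros Hk HLRC Hp N Hno S _ Hlen HnLR.
  apply NNPP. intros Hnp.
  assert (Hpv : forall v, In v S -> ~ (Z.of_nat p | v)%Z).
  { intros v Hv Hpv. apply Hnp. eapply Z.divide_trans; [exact Hpv | apply divide_prodZ, Hv]. }
  destruct (exists_primitive_factor S) as [g [T [Hg [-> Hprim]]]].
  { destruct S as [| v S]; [simpl in Hlen; lia |].
    exists v. split; [left; reflexivity |].
    intros ->. apply (Hpv 0%Z (or_introl eq_refl)), Z.divide_0_r. }
  rewrite length_map in Hlen.
  apply Hno, (exists_folded_cover k p T); auto.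
  - intros HT. exact (HnLR (LR_map_mul g T Hg HT)).
  - intros v Hv HTv. apply (Hpv (g * v)%Z (in_map _ _ _ Hv)), Z.divide_mul_r, HTv.
Qed.
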